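(* Let $G = (V, E, \ell)$ be a graph with positive edge lengths, let $A \subseteq V$ be nonempty, and let $p: V \to A$ be a pivot function for $A$, i.e., for every $v\in V$, $p(v)$ is a vertex of $A$ nearest to $v$ (ties broken arbitrarily but consistently). Then for any $u, v \in V$ with $v \notin B_G(u, p(u))$, we have $\mathrm{dist}_G(p(u), p(v)) \leq 4 \cdot \mathrm{dist}_G(u, v)$.
   Context: $\mathrm{dist}_G$ is the shortest-path distance in $G$ with respect to $\ell$. For vertices $u,w$, $B_G(u, w) = \{x \in V: \mathrm{dist}_G(u, x) < \mathrm{dist}_G(u, w)\}$. *)

From mathcomp Require Import all_boot all_order all_algebra.
From mathcomp Require Import classical_sets reals constructive_ereal ereal.
Set Implicit Arguments. Unset Strict Implicit. Unset Printing Implicit Defensive.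
Import Order.TTheory GRing.Theory Num.Theory.
Local Open Scope ring_scope.
Local Open Scope classical_set_scope.

(* A weighted undirected graph G = (V, E, l): V a finite type, E a symmetric
   edge relation, l : V -> V -> R the edge lengths (only values on edges matter). *)
Definition pos_len_graph {R : realType} {V : finType} (E : rel V) (l : V -> V -> R) :=
  (forall x y, E x y = E y x) /\
  (forall x y, E x y -> l x y = l y x) /\
  (forall x y, E x y -> 0 < l x y).

Fixpoint walk_len {R : realType} {V : finType} (l : V -> V -> R) (u : V) (s : seq V) : R :=
  match s with
  | [::] => 0
  | x :: s' => l u x + walk_len l x s'
  end.

(* Shortest-path distance, valued in extended reals (+oo if unreachable). *)
Definition dist {R : realType} {V : finType} (E : rel V) (l : V -> V -> R) (u v : V)
  : \bar R :=
  ereal_inf [set (walk_len l u s)%:E | s in [set s : seq V | path E u s && (last u s == v)]].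

Definition Bball {R : realType} {V : finType} (E : rel V) (l : V -> V -> R) (u w : V)
  : set V := [set x | (dist E l u x < dist E l u w)%E].

Definition pivot_fun {R : realType} {V : finType} (E : rel V) (l : V -> V -> R)
  (A : {set V}) (p : V -> V) :=
  forall v, p v \in A /\ (forall a, a \in A -> (dist E l v (p v) <= dist E l v a)%E).

From mathcomp Require Import all_boot all_order all_algebra.
From mathcomp Require Import classical_sets reals constructive_ereal ereal.
Import Order.TTheory GRing.Theory Num.Theory.
Local Open Scope ring_scope.
Local Open Scope classical_set_scope.
Set Implicit Arguments. Unset Strict Implicit.

(* Since v lies outside the ball B(u, p u), d(u, p u) <= d(u, v) =: d.  As p v
   is nearest to v among the vertices of A and p u is in A,
   d(v, p v) <= d(v, p u) <= d(v, u) + d(u, p u) <= 2d.  Hence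
   d(p u, p v) <= d(p u, u) + d(u, v) + d(v, p v) <= d + d + 2d = 4d.
   Only the triangle inequality and the symmetry of the shortest-path
   distance are needed. *)

Lemma last_rev_belast (T : Type) (x : T) s : last (last x s) (rev (belast x s)) = x.
Proof. by elim: s x => [|y s IHs] x //=; rewrite rev_cons last_rcons. Qed.

Section ShortestPathDistance.
Variables (R : realType) (V : finType) (E : rel V) (l : V -> V -> R).

Lemma walk_len_cat u s1 s2 :
  walk_len l u (s1 ++ s2) = walk_len l u s1 + walk_len l (last u s1) s2.
Proof. by elim: s1 u => [|x s IHs] u /=; rewrite ?add0r // IHs addrA. Qed.

Lemma walk_len_rcons u s x :
  walk_len l u (rcons s x) = walk_len l u s + l (last u s) x.
Proof. by rewrite -cats1 walk_len_cat /= addr0. Qed.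

Lemma dist_le_walk_len u s : path E u s ->
  (dist E l u (last u s) <= (walk_len l u s)%:E)%E.
Proof. by move=> Eus; apply: ereal_inf_lbound; exists s => //=; rewrite Eus eqxx. Qed.

Lemma dist_lt_walk_len u v (d e : R) : dist E l u v = d%:E -> 0 < e ->
  exists2 s, path E u s /\ last u s = v & walk_len l u s < d + e.
Proof.
move=> duv e_gt0; have : (dist E l u v < (d + e)%:E)%E by rewrite duv lte_fin ltrDl.
by case/ereal_inf_lt => _ [s /andP[Eus /eqP <-] <-]; rewrite lte_fin; exists s.
Qed.

Hypothesis len_ge0 : forall x y, E x y -> 0 <= l x y.

Lemma walk_len_ge0 u s : path E u s -> 0 <= walk_len l u s.
Proof.
by elim: s u => [|x s IHs] u //= /andP[Eux Exs]; rewrite addr_ge0 ?len_ge0 ?IHs.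
Qed.

Lemma dist_ge0 u v : (0 <= dist E l u v)%E.
Proof.
by apply/ereal_infP => _ [s /andP[Eus _] <-]; rewrite lee_fin walk_len_ge0.
Qed.

Lemma dist_triangle x y z : (dist E l x z <= dist E l x y + dist E l y z)%E.
Proof.
have dyz_ge0 := dist_ge0 y z.
case dxy: (dist E l x y) (dist_ge0 x y) => [a| |] // _; last first.
  by rewrite addye ?leey // gt_eqF // (lt_le_trans _ dyz_ge0) // ltNy0.
case dyz: (dist E l y z) dyz_ge0 => [b| |] // _; last by rewrite addey ?leey.
apply/lee_addgt0Pr => e e_gt0; have e2_gt0 : 0 < e / 2 by rewrite divr_gt0.
have [s1 [Exs1 last_s1] lt_s1] := dist_lt_walk_len dxy e2_gt0.
have [s2 [Eys2 last_s2] lt_s2] := dist_lt_walk_len dyz e2_gt0.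
apply: le_trans (_ : (walk_len l x (s1 ++ s2))%:E <= _)%E.
  by rewrite -last_s2 -last_s1 -last_cat dist_le_walk_len // cat_path Exs1 last_s1.
rewrite walk_len_cat last_s1 -!EFinD lee_fin.
have -> : a + b + e = (a + e / 2) + (b + e / 2) by rewrite addrACA -splitr.
by rewrite lerD // ltW.
Qed.

Hypotheses (E_sym : symmetric E) (len_sym : forall x y, E x y -> l x y = l y x).

Lemma walk_len_rev x s : path E x s ->
  walk_len l (last x s) (rev (belast x s)) = walk_len l x s.
Proof.
elim: s x => [|y s IHs] x //= /andP[Exy Eys].
by rewrite rev_cons walk_len_rcons IHs // last_rev_belast addrC (len_sym Exy).
Qed.

Lemma dist_sym u v : dist E l u v = dist E l v u.
Proof.
suff dist_le_sym x y : (dist E l y x <= dist E l x y)%E.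
  by apply/le_anti; rewrite !dist_le_sym.
apply/ereal_infP => _ [s /andP[Exs /eqP <-] <-].
rewrite -walk_len_rev // -[X in dist _ _ _ X](last_rev_belast x s) dist_le_walk_len //.
by rewrite rev_path; apply: sub_path Exs => a b; rewrite /= E_sym.
Qed.

Lemma pivot_dist_le (A : {set V}) (p : V -> V) u v :
  pivot_fun E l A p -> (dist E l u (p u) <= dist E l u v)%E ->
  (dist E l (p u) (p v) <= 4%:E * dist E l u v)%E.
Proof.
move=> pivot_p le_u_pu; set d := dist E l u v.
have le_v_pv : (dist E l v (p v) <= d + d)%E.
  have [pu_A _] := pivot_p u; have [_ nearest_v] := pivot_p v.
  apply: le_trans (nearest_v _ pu_A) _; apply: le_trans (dist_triangle v u _) _.
  by rewrite dist_sym leeD.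
have -> : (4%:E * d = d + (d + (d + d)))%E by rewrite mule_natl.
apply: le_trans (dist_triangle _ u _) _.
rewrite dist_sym; apply: leeD => //; apply: le_trans (dist_triangle _ v _) _.
exact: leeD.
Qed.

End ShortestPathDistance.

Theorem claim4p2 (R : realType) (V : finType) (E : rel V) (l : V -> V -> R)
  (A : {set V}) (p : V -> V) :
  pos_len_graph E l -> (0 < #|A|)%N -> pivot_fun E l A p ->
  forall u v : V, ~ (Bball E l u (p u) v) ->
  (dist E l (p u) (p v) <= 4%:E * dist E l u v)%E.
Proof.
move=> [E_sym [len_sym len_gt0]] _ pivot_p u v v_notin_ball.
have len_ge0 x y : E x y -> 0 <= l x y by move/len_gt0/ltW.
apply: (pivot_dist_le len_ge0 E_sym len_sym pivot_p).
by rewrite leNgt; apply/negP.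
Qed.
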